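(* Let $K$ be an algebraically closed field of characteristic zero, $\deg_1$ the weighted degree on $K[x_1,\dots,x_n]$ assigning positive real weights $w_i$ to $x_i$, $\Phi=(f_1,\dots,f_n)$ a polynomial automorphism of $K^n$, $\Phi^{-1}=(g_1,\dots,g_n)$, $d_i=\deg_1(f_i)$, $\deg_2$ the weighted degree assigning weight $d_i$ to $x_i$, $\Delta_i(P)=\mathrm{j}(g_1,\dots,g_{i-1},P,g_{i+1},\dots,g_n)$, and $I=\{Q : Q(\overline{f_1},\dots,\overline{f_n})=0\}$. Let $i$ be an index with $\deg_2(\Delta_i)\ge -w_i$. Then the leading part $\overline{\Delta_i}$ of $\Delta_i$ with respect to $\deg_2$ is locally nilpotent and satisfies $\overline{\Delta_i}(I)\subset I$.
   Context: $\mathrm{j}$ is the jacobian determinant; $\overline{f}$ is the $\deg_1$-leading term of $f$. For a p.w.h. degree $\deg$ and a $K$-derivation $\partial$, $\deg(\partial)=\sup\{\deg(\partial(P))-\deg(P):P\ne0\}$, and the leading part $\overline{\partial}$ is the $K$-derivation sending each $\deg$-homogeneous $P$ to the homogeneous component of $\partial(P)$ of degree $\deg(\partial)+\deg(P)$; equivalently if $\partial=\sum a_i\partial/\partial x_i$ and $r=\deg(\partial)$ then $\overline{\partial}=\sum b_i\partial/\partial x_i$ with $b_i$ the homogeneous component of $a_i$ of degree $r+\deg(x_i)$. *)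

From HB Require Import structures.
From mathcomp Require Import all_boot all_order all_algebra.
From mathcomp Require Export mpoly.
Set Implicit Arguments. Unset Strict Implicit. Unset Printing Implicit Defensive.
Import Order.TTheory GRing.Theory Num.Theory.
Local Open Scope ring_scope.

Section Defs.
Variables (K : fieldType) (R : realFieldType) (n : nat).

Definition mwdeg (w : 'I_n -> R) (m : 'X_{1..n}) : R :=
  \sum_(i < n) w i * (m i)%:R.

(* weighted degree of a polynomial (meaningful for P != 0; it is the max of
   the weighted degrees of the monomials in the support) *)
Definition wdeg (w : 'I_n -> R) (P : {mpoly K[n]}) : R :=
  \big[Num.max/mwdeg w (head 0%MM (msupp P))]_(m <- msupp P) mwdeg w m.

Definition hcomp (w : 'I_n -> R) (e : R) (P : {mpoly K[n]}) : {mpoly K[n]} :=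
  \sum_(m <- msupp P | mwdeg w m == e) P@_m *: 'X_[m].

Definition wlead (w : 'I_n -> R) (P : {mpoly K[n]}) : {mpoly K[n]} :=
  hcomp w (wdeg w P) P.

Definition jac (F : n.-tuple {mpoly K[n]}) : {mpoly K[n]} :=
  \det (\matrix_(k < n, l < n) (tnth F k)^`M(l)).

Definition poly_inverse (F G : n.-tuple {mpoly K[n]}) : Prop :=
  (forall k : 'I_n, tnth F k \mPo G = 'X_k) /\
  (forall k : 'I_n, tnth G k \mPo F = 'X_k).

Definition Delta (G : n.-tuple {mpoly K[n]}) (i : 'I_n) (P : {mpoly K[n]})
  : {mpoly K[n]} :=
  jac [tuple if k == i then P else tnth G k | k < n].

(* deg(D) = sup { deg(D P) - deg(P) : P != 0 }  (terms with D P = 0 have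
   degree -oo and do not contribute); [is_der_deg w D r] says this sup is the
   real number r. *)
Definition is_der_deg (w : 'I_n -> R) (D : {mpoly K[n]} -> {mpoly K[n]})
  (r : R) : Prop :=
  (forall P, P != 0 -> D P != 0 -> wdeg w (D P) - wdeg w P <= r) /\
  (forall s, (forall P, P != 0 -> D P != 0 -> wdeg w (D P) - wdeg w P <= s)
       -> r <= s).

(* leading part of D of degree r: on a homogeneous P of degree e it is the
   component of D P of degree r + e; extended by linearity (monomial-wise). *)
Definition lead_der (w : 'I_n -> R) (D : {mpoly K[n]} -> {mpoly K[n]})
  (r : R) (P : {mpoly K[n]}) : {mpoly K[n]} :=
  \sum_(m <- msupp P) P@_m *: hcomp w (r + mwdeg w m) (D 'X_[m]).

Definition locally_nilpotent (D : {mpoly K[n]} -> {mpoly K[n]}) : Prop :=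
  forall P, exists k : nat, iter k D P = 0.

End Defs.

From HB Require Import structures.
From mathcomp Require Import all_boot all_order all_algebra.
From mathcomp Require Import mpoly.
From mathcomp Require Import ring.
Set Implicit Arguments. Unset Strict Implicit. Unset Printing Implicit Defensive.
Import Order.TTheory GRing.Theory Num.Theory.
Local Open Scope ring_scope.

(* Since [F o G = id], the jacobian matrices of [F] (evaluated at [G]) and of
   [G] have product 1, so [j(G)] is a nonzero constant [c], and the chain rule
   turns [Delta_i P] into [c ((d/dx_i) (P o F)) o G]: [Delta_i] is conjugate to
   [c d/dx_i], hence locally nilpotent.  On a [deg_2]-homogeneous [H] of degree
   [e] the iterates of the leading part are the components
   [(Delta_i^k H)_(e + k r)], so the leading part is locally nilpotent too.
   Composition with [F] sends [deg_2]-degree [<= b] to [deg_1]-degree [<= b],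
   the component of degree [b] being obtained by composing with the leading
   forms [fbar_k].  So if [H] is homogeneous of degree [e] and [H(fbar) = 0],
   then [deg_1 (H o F) < e]; as [d/dx_i] lowers [deg_1] by [w_i],
   [deg_1 (Delta_i H o F) < e - w_i <= e + r], and the component of degree
   [e + r] of [Delta_i H], which is the leading part applied to [H], vanishes
   at [fbar]. *)

Section WeightedDegree.
Variables (K : fieldType) (R : realFieldType) (n : nat) (v : 'I_n -> R).
Implicit Types (P Q A B : {mpoly K[n]}) (m : 'X_{1..n}).

Lemma mwdeg0 : mwdeg v 0%MM = 0.
Proof. by rewrite /mwdeg big1 // => k _; rewrite mnm0E mulr0. Qed.

Lemma mwdegD m1 m2 : mwdeg v (m1 + m2)%MM = mwdeg v m1 + mwdeg v m2.
Proof.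
by rewrite /mwdeg -big_split; apply: eq_bigr => k _; rewrite mnmDE natrD mulrDr.
Qed.

Lemma mwdegU k : mwdeg v U_(k)%MM = v k.
Proof.
rewrite /mwdeg (bigD1 k) //= mnm1E eqxx mulr1 big1 ?addr0 // => j /negbTE.
by rewrite mnm1E eq_sym => ->; rewrite mulr0.
Qed.

Lemma mcoeff_hcomp e P m :
  (hcomp v e P)@_m = if mwdeg v m == e then P@_m else 0.
Proof.
rewrite /hcomp raddf_sum /= big_mkcond /=.
under eq_bigr do rewrite mcoeffZ mcoeffX.
case: (boolP (m \in msupp P)) => hm.
  rewrite (bigD1_seq m) ?msupp_uniq //= eqxx mulr1 big1 ?addr0 //.
  by move=> j /negbTE ->; rewrite mulr0 if_same.
rewrite big1_seq; first by rewrite (memN_msupp_eq0 hm) if_same.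
move=> j /andP[_ hj]; case: ifP => // _; case: eqP => [ej|]; last by rewrite mulr0.
by move: hj; rewrite ej (negbTE hm).
Qed.

Lemma hcomp_is_linear e : linear (@hcomp K R n v e).
Proof.
move=> c P Q; apply/mpolyP => m.
by rewrite mcoeffD mcoeffZ !mcoeff_hcomp mcoeffD mcoeffZ; case: ifP; rewrite ?mulr0 ?addr0.
Qed.

HB.instance Definition _ e := GRing.isLinear.Build K {mpoly K[n]} {mpoly K[n]} _
  (@hcomp K R n v e) (hcomp_is_linear e).

Lemma hcomp_id e P : hcomp v e (hcomp v e P) = hcomp v e P.
Proof. by apply/mpolyP => m; rewrite !mcoeff_hcomp; case: (mwdeg v m == e). Qed.

Lemma hcomp_hcomp_neq e e' P : e != e' -> hcomp v e (hcomp v e' P) = 0.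
Proof.
move=> ne; apply/mpolyP => m; rewrite !mcoeff_hcomp mcoeff0.
by case: eqP => // ->; rewrite (negbTE ne).
Qed.

Lemma hcompX e m : hcomp v e 'X_[K, m] = if mwdeg v m == e then 'X_[m] else 0.
Proof.
apply/mpolyP => m'; rewrite mcoeff_hcomp (fun_if (mcoeff m')) mcoeffX mcoeff0.
by have [->|/negbTE ne] := eqVneq m m'; rewrite ?ne ?if_same.
Qed.

Lemma hcompE e P : hcomp v e P =
  \sum_(m <- msupp P) (if mwdeg v m == e then P@_m else 0) *: 'X_[m].
Proof.
by rewrite /hcomp big_mkcond; apply: eq_bigr => m _; case: ifP; rewrite ?scale0r.
Qed.

Lemma sum_hcomp P :
  \sum_(e <- undup [seq mwdeg v m | m <- msupp P]) hcomp v e P = P.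
Proof.
apply/mpolyP => m; rewrite raddf_sum /=; under eq_bigr do rewrite mcoeff_hcomp.
case: (boolP (mwdeg v m \in undup [seq mwdeg v m | m <- msupp P])) => hd.
  rewrite (bigD1_seq (mwdeg v m)) ?undup_uniq //= eqxx big1 ?addr0 //.
  by move=> e /negbTE; rewrite eq_sym => ->.
rewrite big1_seq => [|e /andP[_ he]].
  apply/esym/memN_msupp_eq0; apply: contraNN hd => hm; rewrite mem_undup.
  exact: map_f.
by case: eqP => // h; move: hd; rewrite h he.
Qed.

(* [wdeg] is junk at 0, so degree bounds are stated on coefficients. *)
Definition wdeg_atmost (b : R) P := forall m, b < mwdeg v m -> P@_m = 0.
Definition wdeg_below (b : R) P := forall m, b <= mwdeg v m -> P@_m = 0.

Lemma wdeg_atmost_le b b' P : b <= b' -> wdeg_atmost b P -> wdeg_atmost b' P.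
Proof. by move=> le_bb' h m hm; apply: h; apply: le_lt_trans hm. Qed.

Lemma wdeg_below_le b b' P : b <= b' -> wdeg_below b P -> wdeg_below b' P.
Proof. by move=> le_bb' h m hm; apply: h; apply: le_trans hm. Qed.

Lemma wdeg_atmost_below b e P : b < e -> wdeg_atmost b P -> wdeg_below e P.
Proof. by move=> lt_be h m hm; apply: h; apply: lt_le_trans hm. Qed.

Lemma wdeg_atmost0 b : wdeg_atmost b 0.
Proof. by move=> m _; rewrite mcoeff0. Qed.

Lemma wdeg_atmostD b P Q :
  wdeg_atmost b P -> wdeg_atmost b Q -> wdeg_atmost b (P + Q).
Proof. by move=> hP hQ m hm; rewrite mcoeffD hP ?hQ ?addr0. Qed.

Lemma wdeg_atmostZ b c P : wdeg_atmost b P -> wdeg_atmost b (c *: P).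
Proof. by move=> hP m hm; rewrite mcoeffZ hP ?mulr0. Qed.

Lemma wdeg_belowZ b c P : wdeg_below b P -> wdeg_below b (c *: P).
Proof. by move=> hP m hm; rewrite mcoeffZ hP ?mulr0. Qed.

Lemma wdeg_atmostX m : wdeg_atmost (mwdeg v m) 'X_[K, m].
Proof. by move=> m' hm; rewrite mcoeffX; case: eqP => // e; rewrite e ltxx in hm. Qed.

Lemma msupp_wdeg_atmost b P m : wdeg_atmost b P -> m \in msupp P -> mwdeg v m <= b.
Proof. by move=> h; rewrite mcoeff_msupp; apply: contraR; rewrite -ltNge => /h ->. Qed.

Lemma msupp_wdeg_below b P m : wdeg_below b P -> m \in msupp P -> mwdeg v m < b.
Proof. by move=> h; rewrite mcoeff_msupp; apply: contraR; rewrite -leNgt => /h ->. Qed.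

Lemma wdeg_atmost_wdeg P : wdeg_atmost (wdeg v P) P.
Proof.
move=> m hm; apply/eqP; rewrite mcoeff_eq0; apply: contraTN hm => hm.
by rewrite -leNgt /wdeg; apply: le_bigmax_seq hm _.
Qed.

Lemma head_msupp P : P != 0 -> head 0%MM (msupp P) \in msupp P.
Proof. by rewrite -msupp_eq0; case: (msupp P) => //= a l _; rewrite mem_head. Qed.

Lemma wdeg_le_atmost b P : P != 0 -> wdeg_atmost b P -> wdeg v P <= b.
Proof.
move=> nzP h; rewrite /wdeg big_seq_cond; apply: bigmax_le.
  exact/(msupp_wdeg_atmost h)/head_msupp.
by move=> m /andP[/(msupp_wdeg_atmost h)].
Qed.

Lemma wdeg_lt_below b P : P != 0 -> wdeg_below b P -> wdeg v P < b.
Proof.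
move=> nzP h; rewrite /wdeg big_seq_cond; apply: bigmax_lt.
  exact/(msupp_wdeg_below h)/head_msupp.
by move=> m /andP[/(msupp_wdeg_below h)].
Qed.

Lemma hcomp_atmost e P : wdeg_atmost e (hcomp v e P).
Proof. by move=> m hm; rewrite mcoeff_hcomp gt_eqF. Qed.

Lemma hcomp_below0 e P : wdeg_below e P -> hcomp v e P = 0.
Proof.
move=> h; apply/mpolyP => m; rewrite mcoeff_hcomp mcoeff0.
by case: eqP => // em; apply: h; rewrite em.
Qed.

Lemma wdeg_below_hcomp0 b P : wdeg_atmost b P -> hcomp v b P = 0 -> wdeg_below b P.
Proof.
move=> h h0 m; rewrite le_eqVlt => /orP[/eqP e|]; last exact: h.
by have := congr1 (mcoeff m) h0; rewrite mcoeff_hcomp -e eqxx mcoeff0.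
Qed.

Lemma wdeg_below_subhcomp b P : wdeg_atmost b P -> wdeg_below b (P - hcomp v b P).
Proof.
move=> h m hm; rewrite mcoeffB mcoeff_hcomp; case: eqP => [_|ne]; first by rewrite subrr.
by rewrite h ?subr0 // lt_def hm andbT; apply/eqP.
Qed.

Lemma mderiv_wdeg_below b k P : wdeg_below b P -> wdeg_below (b - v k) P^`M(k).
Proof.
move=> h m hm; rewrite mcoeff_mderiv h ?mul0rn //.
by rewrite mwdegD mwdegU -lerBlDr.
Qed.

Definition wtop (b : R) P T := wdeg_atmost b P /\ hcomp v b P = T.

Lemma wtop1 : wtop 0 1 1.
Proof.
rewrite -mpolyX0; split; first by have := @wdeg_atmostX 0%MM; rewrite mwdeg0.
by rewrite hcompX mwdeg0 eqxx.
Qed.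

Lemma wtopM a b A B : wdeg_atmost a A -> wdeg_atmost b B ->
  wtop (a + b) (A * B) (hcomp v a A * hcomp v b B).
Proof.
move=> hA hB; split.
  move=> m hm; rewrite mpolyME raddf_sum /= big1_seq //.
  move=> mm /andP[_ /allpairsP[[m1 m2] [/= h1 h2 ->]]].
  rewrite mcoeffZ mcoeffX; case: eqP; rewrite ?mulr0 // => e; exfalso.
  move: hm; rewrite -e mwdegD; apply/negP; rewrite -leNgt.
  exact: lerD (msupp_wdeg_atmost hA h1) (msupp_wdeg_atmost hB h2).
rewrite mpolyME linear_sum /= !hcompE big_distrl /= big_allpairs.
apply: eq_big_seq => m1 h1; rewrite big_distrr /=; apply: eq_big_seq => m2 h2.
have lm1 := leif_eq (msupp_wdeg_atmost hA h1).
have lm2 := leif_eq (msupp_wdeg_atmost hB h2).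
rewrite linearZ /= hcompX mwdegD (eq_leif (leifD lm1 lm2)).
rewrite -scalerAr -scalerAl -mpolyXD scalerA.
case: ifP => [/andP[-> ->]|E]; first by rewrite mulrC.
by rewrite scaler0; move: E; do 2 case: ifP => _ //=; rewrite ?mulr0 ?mul0r scale0r.
Qed.

Lemma wtop_prod (I : Type) (s : seq I) (a : I -> R) (A : I -> {mpoly K[n]}) :
  (forall k, wdeg_atmost (a k) (A k)) ->
  wtop (\sum_(k <- s) a k) (\prod_(k <- s) A k)
       (\prod_(k <- s) hcomp v (a k) (A k)).
Proof.
move=> hA; elim: s => [|k s [IHa IHt]]; first by rewrite !big_nil; exact: wtop1.
by rewrite !big_cons -IHt; apply: wtopM.
Qed.

Lemma wtopX a A j : wdeg_atmost a A -> wtop (a *+ j) (A ^+ j) (hcomp v a A ^+ j).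
Proof.
move=> hA; rewrite -[j]subn0 -sumr_const_nat -!prodr_const_nat.
exact: wtop_prod.
Qed.

End WeightedDegree.

Section Composition.
Variables (K : fieldType) (R : realFieldType) (n : nat) (w v : 'I_n -> R).
Variable F : n.-tuple {mpoly K[n]}.
Hypothesis F_atmost : forall k, wdeg_atmost w (v k) (tnth F k).
Let Ftop := [tuple hcomp w (v k) (tnth F k) | k < n].

Lemma wtop_comp_mpolyX m :
  wtop w (mwdeg v m) ('X_[m] \mPo F) ('X_[m] \mPo Ftop).
Proof.
have -> : mwdeg v m = \sum_(k < n) v k *+ m k.
  by rewrite /mwdeg; apply: eq_bigr => k _; rewrite mulr_natr.
have -> : 'X_[m] \mPo Ftop = \prod_(k < n) hcomp w (v k *+ m k) (tnth F k ^+ m k).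
  rewrite comp_mpolyX; apply: eq_bigr => k _.
  by rewrite tnth_map tnth_ord_tuple (wtopX (m k) (@F_atmost k)).2.
rewrite comp_mpolyX.
by apply: wtop_prod => k; exact: (wtopX (m k) (@F_atmost k)).1.
Qed.

Lemma wtop_comp b P : wdeg_atmost v b P ->
  wtop w b (P \mPo F) (hcomp v b P \mPo Ftop).
Proof.
move=> hP; rewrite comp_mpolyEX; split.
  rewrite big_seq; apply: (big_ind (wdeg_atmost w b)) => [|P1 P2|m hm].
  - exact: wdeg_atmost0.
  - exact: wdeg_atmostD.
  apply/wdeg_atmostZ/(wdeg_atmost_le (msupp_wdeg_atmost hP hm)).
  exact: (wtop_comp_mpolyX m).1.
rewrite linear_sum hcompE raddf_sum /=; apply: eq_big_seq => m hm.
rewrite linearZ /= comp_mpolyZ.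
have := msupp_wdeg_atmost hP hm; rewrite le_eqVlt => /orP[/eqP e|lt_mb].
  by rewrite e eqxx -(wtop_comp_mpolyX m).2 e.
rewrite (lt_eqF lt_mb) scale0r hcomp_below0 ?scaler0 //.
exact: wdeg_atmost_below lt_mb (wtop_comp_mpolyX m).1.
Qed.

End Composition.

Lemma hcomp_comp_homog (K : fieldType) (R : realFieldType) (n : nat)
    (w v : 'I_n -> R) (F : n.-tuple {mpoly K[n]})
    (F_homog : forall k, hcomp w (v k) (tnth F k) = tnth F k) e P :
  hcomp w e (P \mPo F) = hcomp v e P \mPo F.
Proof.
have F_atmost k : wdeg_atmost w (v k) (tnth F k).
  by rewrite -F_homog; exact: hcomp_atmost.
have FtopE : [tuple hcomp w (v k) (tnth F k) | k < n] = F.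
  by apply: eq_from_tnth => k; rewrite tnth_map tnth_ord_tuple F_homog.
rewrite comp_mpolyEX linear_sum hcompE raddf_sum /=; apply: eq_bigr => m _.
have [_] := wtop_comp_mpolyX F_atmost m; rewrite FtopE => XmF_homog.
rewrite linearZ comp_mpolyZ /=; have [<-|ne] := eqVneq (mwdeg v m) e.
  by rewrite XmF_homog.
by rewrite scale0r -XmF_homog hcomp_hcomp_neq 1?eq_sym ?scaler0.
Qed.

Section MsuppSum.
Variables (K : fieldType) (n : nat) (T : 'X_{1..n} -> {mpoly K[n]}).

Lemma msupp_sum_sub (P : {mpoly K[n]}) s : uniq s -> {subset msupp P <= s} ->
  \sum_(m <- msupp P) P@_m *: T m = \sum_(m <- s) P@_m *: T m.
Proof.
move=> s_uniq sub; rewrite [RHS](bigID (mem (msupp P))) /= [X in _ = _ + X]big1 ?addr0.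
  rewrite -[RHS]big_filter; apply/perm_big/uniq_perm.
  - exact: msupp_uniq.
  - exact: filter_uniq.
  by move=> x; rewrite mem_filter; case: (boolP (x \in msupp P)) => // /sub ->.
by move=> m hm; rewrite memN_msupp_eq0 ?scale0r.
Qed.

Lemma msupp_sum_is_linear :
  linear (fun P : {mpoly K[n]} => \sum_(m <- msupp P) P@_m *: T m).
Proof.
move=> a P Q /=; set s := undup (msupp P ++ msupp Q).
have s_uniq : uniq s := undup_uniq _.
have sP : {subset msupp P <= s} by move=> m hm; rewrite mem_undup mem_cat hm.
have sQ : {subset msupp Q <= s} by move=> m hm; rewrite mem_undup mem_cat hm orbT.
have sPQ : {subset msupp (a *: P + Q) <= s}.
  by move=> m /msuppD_le; rewrite mem_cat => /orP[/msuppZ_le/sP|/sQ].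
rewrite !(msupp_sum_sub s_uniq) // scaler_sumr -big_split /=.
by apply: eq_bigr => m _; rewrite mcoeffD mcoeffZ scalerDl scalerA.
Qed.

End MsuppSum.

Section LocallyNilpotent.
Variables (K : fieldType) (n : nat).

Lemma locally_nilpotent_mpolyX (f : {linear {mpoly K[n]} -> {mpoly K[n]}}) :
  (forall m, exists k, iter k f 'X_[m] = 0) -> locally_nilpotent f.
Proof.
move=> fX; have iterP k a P Q : iter k f (a *: P + Q) = a *: iter k f P + iter k f Q.
  by elim: k => //= k ->; rewrite linearP.
have iter0 k : iter k f 0 = 0 by elim: k => //= k ->; rewrite linear0.
elim/mpolyind => [|a m P _ _ [k2 h2]]; first by exists 0%N.
have [k1 h1] := fX m; exists (k1 + k2)%N.
by rewrite iterP {1}addnC !iterD h1 h2 !iter0 scaler0 addr0.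
Qed.

Lemma mderiv_locally_nilpotent (i : 'I_n) : locally_nilpotent (@mderiv n K i).
Proof.
apply: locally_nilpotent_mpolyX => m; exists (m i).+1.
by rewrite -mderivn_iter mderivnX ffact_small ?scale0r.
Qed.

End LocallyNilpotent.

Section ChainRule.
Variables (K : fieldType) (n : nat) (G : n.-tuple {mpoly K[n]}).
Implicit Types (p q : {mpoly K[n]}).

Lemma mderivXU (k j : 'I_n) : ('X_k : {mpoly K[n]})^`M(j) = (k == j)%:R.
Proof.
rewrite mderivX mnm1E; case: eqP => [<-|_]; last by rewrite scale0r.
by rewrite -[X in (X - _)%MM]add0m addmK mpolyX0 scale1r.
Qed.

Let chain_at p := forall l,
  (p \mPo G)^`M(l) = \sum_(j < n) (p^`M(j) \mPo G) * (tnth G j)^`M(l).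

Let chain_atC c : chain_at c%:MP.
Proof.
move=> l; rewrite comp_mpolyC mderivC big1 // => j _.
by rewrite mderivC comp_mpoly0 mul0r.
Qed.

Let chain_atD p q : chain_at p -> chain_at q -> chain_at (p + q).
Proof.
move=> hp hq l; rewrite comp_mpolyD mderivD hp hq -big_split /=.
by apply: eq_bigr => j _; rewrite mderivD comp_mpolyD mulrDl.
Qed.

Let chain_atM p q : chain_at p -> chain_at q -> chain_at (p * q).
Proof.
move=> hp hq l; rewrite rmorphM /= mderivM hp hq big_distrl big_distrr -big_split /=.
by apply: eq_bigr => j _; rewrite mderivM comp_mpolyD !rmorphM /=; ring.
Qed.

Let chain_atXU k : chain_at 'X_k.
Proof.
move=> l; rewrite comp_mpolyXU -tnth_nth (bigD1 k) //= mderivXU eqxx comp_mpoly1 mul1r.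
rewrite big1 ?addr0 // => j /negbTE; rewrite mderivXU eq_sym => ->.
by rewrite comp_mpoly0 mul0r.
Qed.

Lemma mderiv_comp p l :
  (p \mPo G)^`M(l) = \sum_(j < n) (p^`M(j) \mPo G) * (tnth G j)^`M(l).
Proof.
have chain_atX m : chain_at 'X_[m].
  rewrite mpolyXE_id; apply: (big_ind chain_at) => [|q q'|k _].
  - exact: chain_atC 1.
  - exact: chain_atM.
  elim: (m k) => [|e IH]; first exact: chain_atC 1.
  by rewrite exprS; apply: chain_atM (chain_atXU k) IH.
move: l; elim/mpolyind: p => [|c m p _ _ IH]; first by rewrite -mpolyC0; exact: chain_atC.
by rewrite -mul_mpolyC; apply: chain_atD (chain_atM (chain_atC c) (chain_atX m)) IH.
Qed.

Lemma comp_mpolyA p (F : n.-tuple {mpoly K[n]}) :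
  (p \mPo F) \mPo G = p \mPo [tuple tnth F k \mPo G | k < n].
Proof.
rewrite (comp_mpolyEX p F) (comp_mpolyEX p) raddf_sum; apply: eq_bigr => m _.
rewrite -[LHS]/(comp_mpoly G (p@_m *: ('X_[m] \mPo F))) comp_mpolyZ !comp_mpolyX.
rewrite rmorph_prod; congr (_ *: _); apply: eq_bigr => k _.
by rewrite rmorphXn tnth_map tnth_ord_tuple.
Qed.

Lemma comp_mpolyK (F : n.-tuple {mpoly K[n]}) :
  (forall k, tnth F k \mPo G = 'X_k) -> cancel (comp_mpoly F) (comp_mpoly G).
Proof.
move=> FG p; rewrite /= comp_mpolyA -[RHS]comp_mpoly_id; congr (_ \mPo _).
by apply: eq_from_tnth => k; rewrite !tnth_map !tnth_ord_tuple FG.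
Qed.

End ChainRule.

Section RowReplace.
Variables (T : comPzRingType) (n : nat) (A : 'M[T]_n) (i : 'I_n).

Definition row_replace (u : 'rV[T]_n) : 'M[T]_n :=
  \matrix_(k, l) if k == i then u 0 l else A k l.

Lemma det_row_replaceDZ a u u' : \det (row_replace (a *: u + u')) =
  a * \det (row_replace u) + \det (row_replace u').
Proof.
have row'_replace x y : row' i (row_replace x) = row' i (row_replace y).
  by apply/matrixP => k l; rewrite !mxE eq_sym (negbTE (neq_lift i k)).
rewrite -[\det (row_replace u')]mul1r; apply: (determinant_multilinear (i0 := i)).
- by apply/rowP => l; rewrite !mxE eqxx mul1r.
- exact: row'_replace.
- exact: row'_replace.
Qed.

Lemma det_row_replace_comb (c : 'I_n -> T) :
  \det (row_replace (\sum_(j < n) c j *: row j A)) = c i * \det A.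
Proof.
have det_sum (s : seq 'I_n) : \det (row_replace (\sum_(j <- s) c j *: row j A)) =
    \sum_(j <- s) c j * \det (row_replace (row j A)).
  elim: s => [|j s IH]; last by rewrite !big_cons det_row_replaceDZ IH.
  rewrite !big_nil; have := det_row_replaceDZ 1 0 0.
  rewrite scale1r addr0 mul1r => det0.
  by apply: (addrI (\det (row_replace 0))); rewrite addr0 -det0.
rewrite (det_sum (index_enum 'I_n)) (bigD1 i) //= big1 ?addr0 => [|j nji].
  congr (_ * \det _); apply/matrixP => k l.
  by rewrite !mxE; case: eqP => [->|].
rewrite (@determinant_alternate _ _ _ i j) ?mulr0 1?eq_sym // => l.
by rewrite !mxE eqxx (negbTE nji).
Qed.

End RowReplace.

Section Jacobian.
Variables (K : fieldType) (n : nat).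
Implicit Types (P q : {mpoly K[n]}) (F G : n.-tuple {mpoly K[n]}).

Definition jacobian_mx G := \matrix_(k < n, l < n) (tnth G k)^`M(l).

Lemma Delta_row_replace G i P :
  Delta G i P = \det (row_replace (jacobian_mx G) i (\row_l P^`M(l))).
Proof.
rewrite /Delta /jac; congr (\det _); apply/matrixP => k l.
by rewrite !mxE tnth_map tnth_ord_tuple; case: ifP.
Qed.

Lemma Delta_is_linear G i : linear (Delta G i).
Proof.
move=> a P Q; rewrite !Delta_row_replace -[in RHS]mul_mpolyC -det_row_replaceDZ.
by congr (\det (row_replace _ _ _)); apply/rowP => l; rewrite !mxE mderivD mderivZ mul_mpolyC.
Qed.

HB.instance Definition _ G i := GRing.isLinear.Build K {mpoly K[n]} {mpoly K[n]} _
  (Delta G i) (Delta_is_linear G i).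

Lemma Delta_comp G i q : Delta G i (q \mPo G) = (q^`M(i) \mPo G) * jac G.
Proof.
rewrite Delta_row_replace /jac -/(jacobian_mx G).
rewrite -(det_row_replace_comb _ _ (fun j => q^`M(j) \mPo G)); congr (\det (row_replace _ _ _)).
by apply/rowP => l; rewrite mxE mderiv_comp summxE; apply: eq_bigr => j _; rewrite !mxE.
Qed.

Lemma jac_inverse_const F G :
  (forall k, tnth F k \mPo G = 'X_k) -> jac G = ((jac G)@_0)%:MP.
Proof.
move=> FG; pose M := \matrix_(k, j) ((tnth F k)^`M(j) \mPo G).
have MJ : M *m jacobian_mx G = 1%:M.
  apply/matrixP => k l; rewrite mxE [RHS]mxE.
  have := mderiv_comp G (tnth F k) l; rewrite FG mderivXU => ->.
  by apply: eq_bigr => j _; rewrite !mxE.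
have : \det M * jac G = 1 by rewrite -det_mulmx MJ det1.
by move/mpoly_intro_unit => /andP[/eqP].
Qed.

End Jacobian.

Section LeadingPart.
Variables (K : fieldType) (R : realFieldType) (n : nat) (v : 'I_n -> R).

Lemma lead_der_is_linear (D : {mpoly K[n]} -> {mpoly K[n]}) r :
  linear (lead_der v D r).
Proof. exact: msupp_sum_is_linear. Qed.

HB.instance Definition _ D r := GRing.isLinear.Build K {mpoly K[n]} {mpoly K[n]} _
  (lead_der v D r) (lead_der_is_linear D r).

Variables (D : {linear {mpoly K[n]} -> {mpoly K[n]}}) (r : R).

Lemma lead_der_homog e H : hcomp v e H = H -> lead_der v D r H = hcomp v (r + e) (D H).
Proof.
move=> H_homog; rewrite /lead_der [in RHS](mpolyE H) !linear_sum /=.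
apply: eq_big_seq => m hm; rewrite !linearZ /=; congr (_ *: hcomp _ (r + _) _).
by move: hm; rewrite mcoeff_msupp -H_homog mcoeff_hcomp; case: ifP => [/eqP //|]; rewrite eqxx.
Qed.

Hypothesis D_deg : forall P, P != 0 -> D P != 0 -> wdeg v (D P) - wdeg v P <= r.

Lemma wdeg_atmost_der b P : wdeg_atmost v b P -> wdeg_atmost v (b + r) (D P).
Proof.
move=> hP; have [->|nzP] := eqVneq P 0; first by rewrite linear0; exact: wdeg_atmost0.
have [->|nzDP] := eqVneq (D P) 0; first exact: wdeg_atmost0.
apply: wdeg_atmost_le; last exact: wdeg_atmost_wdeg.
rewrite -(subrK (wdeg v P) (wdeg v (D P))) addrC lerD ?D_deg //.
exact: wdeg_le_atmost.
Qed.

Lemma wdeg_below_der b P : wdeg_below v b P -> wdeg_below v (b + r) (D P).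
Proof.
move=> hP; have [->|nzP] := eqVneq P 0; first by rewrite linear0 => m _; rewrite mcoeff0.
have [->|nzDP] := eqVneq (D P) 0; first by move=> m _; rewrite mcoeff0.
move=> m hm; apply: wdeg_atmost_wdeg; apply: lt_le_trans hm.
rewrite -(subrK (wdeg v P) (wdeg v (D P))) addrC ltr_leD ?D_deg //.
exact: wdeg_lt_below.
Qed.

Lemma wdeg_atmost_iter b P k :
  wdeg_atmost v b P -> wdeg_atmost v (b + k%:R * r) (iter k D P).
Proof.
move=> hP; elim: k => [|k IH]; first by rewrite mul0r addr0.
by rewrite iterS -natr1 mulrDl mul1r addrA; apply: wdeg_atmost_der.
Qed.

Lemma iter_lead_der_homog e H k : hcomp v e H = H ->
  iter k (lead_der v D r) H = hcomp v (e + k%:R * r) (iter k D H).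
Proof.
move=> H_homog; elim: k => [|k IH]; first by rewrite mul0r addr0 H_homog.
have -> : e + k.+1%:R * r = e + k%:R * r + r by rewrite -natr1 mulrDl mul1r addrA.
rewrite !iterS IH (lead_der_homog (hcomp_id _ _ _)) addrC.
set b := e + k%:R * r; set X := iter k D H.
have X_atmost : wdeg_atmost v b X.
  by apply: wdeg_atmost_iter; rewrite -H_homog; exact: hcomp_atmost.
rewrite -[in RHS](subrK (hcomp v b X) X) [in RHS]linearD [in RHS]linearD /=.
by rewrite (hcomp_below0 (wdeg_below_der (wdeg_below_subhcomp X_atmost))) add0r.
Qed.

Lemma lead_der_locally_nilpotent :
  locally_nilpotent D -> locally_nilpotent (lead_der v D r).
Proof.
move=> D_nil; apply: locally_nilpotent_mpolyX => m.
have Xm_homog : hcomp v (mwdeg v m) 'X_[K, m] = 'X_[m] by rewrite hcompX eqxx.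
have [k hk] := D_nil 'X_[m]; exists k.
by rewrite (iter_lead_der_homog k Xm_homog) hk linear0.
Qed.

End LeadingPart.

Section Automorphism.
Variables (K : fieldType) (R : realFieldType) (n : nat) (w : 'I_n -> R).
Variables (F G : n.-tuple {mpoly K[n]}) (FG : poly_inverse F G) (i : 'I_n).
Let c := (jac G)@_0.

Lemma Delta_conj P : Delta G i P = c *: ((P \mPo F)^`M(i) \mPo G).
Proof.
by rewrite -{1}(comp_mpolyK FG.1 P) Delta_comp mulrC (jac_inverse_const FG.1) mul_mpolyC.
Qed.

Lemma iter_Delta_comp k q :
  iter k (Delta G i) (q \mPo G) = c ^+ k *: (iter k (mderiv i) q \mPo G).
Proof.
elim: k => [|k IH]; first by rewrite expr0 scale1r.
by rewrite !iterS IH linearZ /= Delta_conj (comp_mpolyK FG.2) scalerA -exprSr.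
Qed.

Lemma Delta_locally_nilpotent : locally_nilpotent (Delta G i).
Proof.
move=> P; have [k hk] := mderiv_locally_nilpotent i (P \mPo F); exists k.
by rewrite -(comp_mpolyK FG.1 P) iter_Delta_comp hk comp_mpoly0 scaler0.
Qed.

Variable r : R.
Let w2 : 'I_n -> R := [ffun k => wdeg w (tnth F k)].
Hypothesis hr : is_der_deg w2 (Delta G i) r.
Hypothesis hri : - w i <= r.
Let fb := [tuple wlead w (tnth F k) | k < n].

Let F_atmost k : wdeg_atmost w (w2 k) (tnth F k).
Proof. by rewrite /w2 ffunE; exact: wdeg_atmost_wdeg. Qed.

Let FtopE : [tuple hcomp w (w2 k) (tnth F k) | k < n] = fb.
Proof. by apply: eq_from_tnth => k; rewrite !tnth_map /wlead /w2 ffunE. Qed.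

Let fb_homog k : hcomp w (w2 k) (tnth fb k) = tnth fb k.
Proof. by rewrite -FtopE tnth_map tnth_ord_tuple hcomp_id. Qed.

Lemma lead_der_ideal Q : Q \mPo fb = 0 -> lead_der w2 (Delta G i) r Q \mPo fb = 0.
Proof.
move=> hQ; rewrite -(sum_hcomp w2 Q) [lead_der _ _ _ _]linear_sum raddf_sum big1 // => e _ /=.
set H := hcomp w2 e Q.
have H_homog : hcomp w2 e H = H := hcomp_id _ _ _.
have H_atmost : wdeg_atmost w2 e H by rewrite -H_homog; exact: hcomp_atmost.
have H_ideal : H \mPo fb = 0 by rewrite /H -(hcomp_comp_homog fb_homog) hQ linear0.
have [HF_atmost HF_top] := wtop_comp F_atmost H_atmost.
rewrite FtopE H_homog H_ideal in HF_top.
have HF_below := wdeg_below_hcomp0 HF_atmost HF_top.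
have DHF_below : wdeg_below w (e + r) (Delta G i H \mPo F).
  rewrite Delta_conj comp_mpolyZ (comp_mpolyK FG.2); apply: wdeg_belowZ.
  by apply: (wdeg_below_le _ (mderiv_wdeg_below (k := i) HF_below)); rewrite lerD2l.
have [_ DH_top] := wtop_comp F_atmost (wdeg_atmost_der hr.1 H_atmost).
rewrite FtopE in DH_top.
by rewrite (lead_der_homog _ _ H_homog) addrC -DH_top hcomp_below0.
Qed.

End Automorphism.

Unset Implicit Arguments.
Theorem lemma6 (K : closedFieldType) (R : realFieldType) (n : nat)
  (Kchar0 : [pchar K] =i pred0)
  (w : 'I_n -> R) (w_pos : forall k, 0 < w k)
  (F G : n.-tuple {mpoly K[n]}) (FG : poly_inverse F G)
  (i : 'I_n) (r : R)
  (hr : is_der_deg [ffun k => wdeg w (tnth F k)] (Delta G i) r)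
  (hri : - w i <= r) :
  let w2 := [ffun k => wdeg w (tnth F k)] in
  let I := fun Q : {mpoly K[n]} =>
             Q \mPo [tuple wlead w (tnth F k) | k < n] = 0 in
  locally_nilpotent (lead_der w2 (Delta G i) r) /\
  (forall Q, I Q -> I (lead_der w2 (Delta G i) r Q)).
Proof.
(* The argument works over any field and for arbitrary real weights. *)
move=> w2 I; split.
- exact: lead_der_locally_nilpotent hr.1 (Delta_locally_nilpotent FG i).
- by move=> Q hQ; exact: (lead_der_ideal FG hr hri hQ).
Qed.
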